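(* Let $G$ be a minimal BTB graph and $1\le r<d\le |W|-|B|-1$. Then every TCD map $T$ on $G$ of rank $r$ into $\mathbb{CP}^r$ is, up to a projective transformation of $\mathbb{CP}^r$, the central projection $\pi_U\circ\hat T$ of a TCD map $\hat T$ on $G$ of rank $d$ into $\mathbb{CP}^d$, from some $\hat T$-admissible subspace $U\subset\mathbb{CP}^d$ of dimension $d-r-1$.
   Context: A BTB graph is a finite planar bipartite graph (black $B$, white $W$) in a closed disk or cactus, with boundary white vertices on the boundary and every black vertex of degree $3$. It is minimal if zig-zag paths (turning maximally left at white and right at black vertices) are never closed, never traverse an edge twice, and no two both traverse two distinct edges $e_1$ then $e_2$. A TCD map is $T:W\to\mathbb{CP}^d$ such that for each black vertex $b$ the images of its three white neighbours are pairwise distinct and lie on a line $L_b$. Its rank is the dimension of the span of its image. For a projective subspace $U\subset\mathbb{CP}^d$ of dimension $d-r-1$ and a complementary subspace $V$ of dimension $r$, the central projection $\pi_U:\mathbb{CP}^d\dashrightarrow V\cong\mathbb{CP}^r$ sends $P\notin U$ to $V\cap\mathrm{span}(U,P)$. $U$ is $\hat T$-admissible if no $\hat T(w)$ lies in $U$ and $U\cap L_b=\emptyset$ for every black vertex $b$; then $\pi_U\circ\hat T$ is a TCD map. *)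

From HB Require Import structures.
From mathcomp Require Import all_boot all_order all_algebra all_fingroup.
From mathcomp Require Import complex.
From mathcomp Require Import reals Rstruct.
Set Implicit Arguments. Unset Strict Implicit. Unset Printing Implicit Defensive.
Import Order.TTheory GRing.Theory Num.Theory.
Local Open Scope ring_scope.

Definition C : numClosedFieldType := (Rdefinitions.R)[i].

(* W, B : white / black vertices; E : edges, edge e joins white vertex      *)
(* wv e to black vertex bv e.  The embedding is encoded as a rotation       *)
(* system (combinatorial map) on the sphere of the graph G' obtained from G *)
(* by adding one extra vertex "infinity" (the complement of the disk /      *)
(* cactus) and one "leg" l : L from the white boundary vertex lw l to       *)
(* infinity for every boundary corner (one per boundary vertex for a disk,  *)
(* possibly several at the pinch points of a cactus).                       *)
(* Darts: inl (e, true) = white end of e, inl (e, false) = black end of e,  *)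
(*        inr (l, true) = white end of leg l, inr (l, false) = end at oo.    *)
(* sigma is the (counterclockwise) rotation of darts around their vertex;   *)

Definition dart (E L : finType) := ((E * bool) + (L * bool))%type.

Definition dvert (W B E L : finType) (wv : E -> W) (bv : E -> B) (lw : L -> W)
  (d : dart E L) : (W + B) + unit :=
  match d with
  | inl (e, true) => inl (inl (wv e))
  | inl (e, false) => inl (inr (bv e))
  | inr (l, true) => inl (inl (lw l))
  | inr (l, false) => inr tt
  end.

Definition dflip (E L : finType) (d : dart E L) : dart E L :=
  match d with
  | inl (e, b) => inl (e, ~~ b)
  | inr (l, b) => inr (l, ~~ b)
  end.

(* Faces of the map are the orbits of sigma o flip; components are the     *)
(* classes of the equivalence generated by sigma and flip.                  *)
Definition dface (E L : finType) (sigma : {perm dart E L}) (d : dart E L) :=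
  sigma (dflip d).

Definition dadj (E L : finType) (sigma : {perm dart E L}) : rel (dart E L) :=
  fun x y => (y == sigma x) || (y == dflip x).

(*  - sigma permutes cyclically the darts at each vertex of G';             *)
(*  - G' is embedded in the sphere: Euler's formula V - E + F = 2 holds     *)
(*    on every connected component (equivalently sum = 2 * #components).    *)
Definition is_BTB (W B E L : finType) (wv : E -> W) (bv : E -> B) (lw : L -> W)
  (sigma : {perm dart E L}) : Prop :=
  [/\ forall b : B, #|[set e | bv e == b]| = 3%N,
      forall d d' : dart E L,
        fconnect sigma d d' = (dvert wv bv lw d == dvert wv bv lw d')
    & (fcard sigma predT + fcard (dface sigma) predT
        = #|E| + #|L| + 2 * n_comp (dadj sigma) predT)%N ].

Definition boundary_white (W E L : finType) (lw : L -> W) : pred W :=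
  fun w => [exists l, lw l == w].

(* Zig-zag paths.  A state (e, true) means traversing e from its black end *)
(* towards its white end, (e, false) from white towards black.           *)
(* Arriving at a white vertex the path turns maximally left, i.e. leaves    *)
(* along the clockwise-next dart (sigma^-1); if that dart is a leg the path *)
(* has reached the boundary and stops.  Arriving at a black vertex it turns *)
(* maximally right, i.e. leaves along the counterclockwise-next dart.       *)

Definition zz_step (E L : finType) (sigma : {perm dart E L}) (s : E * bool)
  : option (E * bool) :=
  match s with
  | (e, true) =>
      match (sigma^-1)%g (inl (e, true)) with
      | inl (f, true) => Some (f, false)
      | _ => None
      end
  | (e, false) =>
      match sigma (inl (e, false)) with
      | inl (f, false) => Some (f, true)
      | _ => None
      end
  end.

Definition zz_iter (E L : finType) (sigma : {perm dart E L}) (n : nat)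
  (s : E * bool) : option (E * bool) :=
  iter n (fun o => obind (zz_step sigma) o) (Some s).

Definition zz_reach (E L : finType) (sigma : {perm dart E L}) (s t : E * bool) :=
  exists n, zz_iter sigma n s = Some t.

(*  (1) no zig-zag path is closed;                                          *)
(*  (2) no zig-zag path traverses an edge twice (repeating a state is       *)
(*      excluded by (1); here: not in both directions);                     *)
(*  (3) no two zig-zag paths both traverse distinct edges e1 then e2.       *)
Definition minimal_BTB (E L : finType) (sigma : {perm dart E L}) : Prop :=
  [/\ forall s n, zz_iter sigma n.+1 s <> Some s,
      forall e : E, ~ zz_reach sigma (e, true) (e, false)
                 /\ ~ zz_reach sigma (e, false) (e, true)
    & forall s1 t1 s2 t2 : E * bool,
        s1.1 = s2.1 -> t1.1 = t2.1 -> s1.1 <> t1.1 ->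
        zz_reach sigma s1 t1 -> zz_reach sigma s2 t2 -> s1 = s2 ].

(* Projective geometry over C.  A point of CP^n is represented by a nonzero *)
(* row vector of 'rV[C]_n.+1; projective subspaces by row spaces (%MS).    *)

Definition proj_eq (n : nat) (u v : 'rV[C]_n) : bool := (u == v)%MS.

Definition line_b (W B E : finType) (wv : E -> W) (bv : E -> B) (n : nat)
  (T : W -> 'rV[C]_n.+1) (b : B) : 'M[C]_n.+1 :=
  (\sum_(e | bv e == b) <<T (wv e)>>)%MS.

Definition is_TCD (W B E : finType) (wv : E -> W) (bv : E -> B) (n : nat)
  (T : W -> 'rV[C]_n.+1) : Prop :=
  (forall w, T w != 0) /\
  (forall b : B,
     (forall e e' : E, bv e = b -> bv e' = b -> e != e' ->
        ~~ proj_eq (T (wv e)) (T (wv e')))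
     /\ (\rank (line_b wv bv T b) <= 2)%N).

Definition tcd_rank (W : finType) (n : nat) (T : W -> 'rV[C]_n.+1) : nat :=
  (\rank (\sum_(w : W) <<T w>>)%MS).-1.

(* Central projection from U onto the complementary subspace V:            *)
(* P |-> V /\ span(U, P), i.e. the linear projection onto V along U.       *)
Definition central_proj (n : nat) (U V : 'M[C]_n.+1) (x : 'rV[C]_n.+1)
  : 'rV[C]_n.+1 := x *m proj_mx V U.

Definition admissible (W B E : finType) (wv : E -> W) (bv : E -> B) (n : nat)
  (T : W -> 'rV[C]_n.+1) (U : 'M[C]_n.+1) : Prop :=
  (forall w, ~~ (T w <= U)%MS) /\
  (forall b : B, \rank (U :&: line_b wv bv T b)%MS = 0%N).

From HB Require Import structures.
From mathcomp Require Import all_boot all_order all_algebra all_fingroup.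
From mathcomp Require Import complex.
From mathcomp Require Import reals Rstruct.
From mathcomp Require Import zify.
Set Implicit Arguments. Unset Strict Implicit. Unset Printing Implicit Defensive.
Import Order.TTheory GRing.Theory Num.Theory.
Local Open Scope ring_scope.

(* At each black vertex b the three points T(w), w ~ b, lie on a line, so
   they satisfy a nontrivial linear relation.  Recording one relation per
   black vertex gives a |W| x |B| matrix Phi such that a matrix M with |W|
   columns satisfies M Phi = 0 exactly when its columns, read as a map on W,
   satisfy the same relations.  The left kernel of Phi has dimension at least
   |W| - |B| >= d + 1 and contains the r + 1 coordinate rows of T; completing
   them by d - r further kernel rows to a matrix of rank d + 1 yields a lift
   T^ : W -> CP^d of rank d whose lines L_b still have rank at most 2.
   Forgetting the new coordinates, i.e. projecting from U (the last d - r
   coordinate points) onto V (the first r + 1), gives back T.  Each L_b maps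
   onto the corresponding line of T, which also has rank 2, so L_b meets the
   kernel of the projection, and hence U, trivially. *)

Section SpanOfFamily.
Variables (F : fieldType) (I : finType) (n : nat).
Implicit Types (A : {set I}) (u : I -> 'rV[F]_n) (g : I -> F).

Lemma rank_sum_genmx_le_card A u : (\rank (\sum_(i in A) <<u i>>)%MS <= #|A|)%N.
Proof.
rewrite -sum1_card; elim/big_rec2: _ => [|i X k _ le_Xk]; first by rewrite mxrank0.
apply: leq_trans (mxrank_adds_leqif <<u i>>%MS X).1 (leq_add _ le_Xk).
by rewrite mxrank_gen rank_leq_row.
Qed.

Lemma exists_linear_relation A u :
  (\rank (\sum_(i in A) <<u i>>)%MS < #|A|)%N ->
  exists2 g, \sum_(i in A) g i *: u i = 0 & exists2 i, i \in A & g i != 0.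
Proof.
move=> rank_lt.
have [i0 i0A] : exists i0, i0 \in A by apply/card_gt0P; apply: leq_ltn_trans rank_lt.
pose M := \matrix_(k < #|A|) u (enum_val k).
have M_sub : (M <= \sum_(i in A) <<u i>>)%MS.
  apply/row_subP => k; rewrite rowK.
  by apply: (sumsmx_sup (enum_val k)); rewrite ?enum_valP ?genmxE.
have /rowV0Pn[v /sub_kermxP vM v_neq0] : kermx M != 0.
  rewrite kermx_eq0 /row_free neq_ltn (leq_ltn_trans (mxrankS M_sub) rank_lt) //.
exists (fun i => v 0 (enum_rank_in i0A i)).
  rewrite -[RHS]vM mulmx_sum_row (big_enum_rank i0A) /=.
  by apply: eq_bigr => i iA; rewrite rowK enum_rankK_in.
have [k vk_neq0] : exists k, v 0 k != 0.
  apply/existsP; apply: contraNT v_neq0; rewrite negb_exists => /forallP v0.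
  by apply/eqP/rowP => k; rewrite mxE; apply/eqP/negPn/v0.
by exists (enum_val k); rewrite ?enum_valP ?enum_valK_in.
Qed.

Lemma linear_relation_rank_le A u g i0 :
  \sum_(i in A) g i *: u i = 0 -> i0 \in A -> g i0 != 0 ->
  (\rank (\sum_(i in A) <<u i>>)%MS <= #|A|.-1)%N.
Proof.
move=> rel i0A g_i0.
have u_i0 : u i0 = - (g i0)^-1 *: \sum_(i in A :\ i0) g i *: u i.
  move: rel; rewrite (bigD1 i0) //= (eq_bigl (mem (A :\ i0))) => [/eqP|i].
    rewrite addr_eq0 => /eqP rel.
    by rewrite -[u i0]scale1r -(mulVf g_i0) -scalerA rel scalerN scaleNr.
  by rewrite !inE andbC.
have span_sub : (\sum_(i in A) <<u i>> <= \sum_(i in A :\ i0) <<u i>>)%MS.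
  apply/sumsmx_subP => i iA; rewrite genmxE.
  have [-> | i_neq_i0] := eqVneq i i0; last first.
    by apply: (sumsmx_sup i); rewrite ?in_setD1 ?i_neq_i0 ?genmxE.
  rewrite u_i0 scalemx_sub // summx_sub // => j jA; rewrite scalemx_sub //.
  by apply: (sumsmx_sup j); rewrite ?genmxE.
apply: leq_trans (mxrankS span_sub) (leq_trans (rank_sum_genmx_le_card _ _) _).
by rewrite (cardsD1 i0 A) i0A.
Qed.

Lemma rank_sum_genmx_gt1 A u i1 i2 :
  i1 \in A -> i2 \in A -> u i1 != 0 -> u i2 != 0 -> ~~ (u i1 == u i2)%MS ->
  (1 < \rank (\sum_(i in A) <<u i>>)%MS)%N.
Proof.
move=> i1A i2A u1_neq0 u2_neq0; apply: contraR; rewrite -leqNgt => rank_le1.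
set S := (\sum_(i in A) <<u i>>)%MS.
have sub_S i : i \in A -> (u i <= S)%MS by move=> iA; rewrite -genmxE (sumsmx_sup i).
have S_sub i : i \in A -> u i != 0 -> (S <= u i)%MS.
  move=> iA ui_neq0; rewrite -(mxrank_leqif_sup (sub_S i iA)).2 eqn_leq mxrankS ?sub_S //.
  by rewrite rank_rV ui_neq0 (leq_trans rank_le1).
by rewrite !(submx_trans (sub_S _ _) (S_sub _ _ _)).
Qed.

End SpanOfFamily.

Lemma exists_col_mx_extension (F : fieldType) p m n
    (A : 'M[F]_(p, n)) (K : 'M[F]_n) :
  (A <= K)%MS -> (\rank A + m <= \rank K)%N ->
  exists2 Z : 'M[F]_(m, n), (Z <= K)%MS & \rank (col_mx A Z) = (\rank A + m)%N.
Proof.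
move=> sAK rank_le.
pose D := (K :\: A)%MS.
have rank_D : (m <= \rank D)%N.
  by move: (mxrank_cap_compl K A); rewrite (capmx_idPr sAK) -/D; lia.
pose Z : 'M[F]_(m, n) := pid_mx m *m row_base D.
have rank_Z : \rank Z = m by rewrite mxrankMfree ?row_base_free ?rank_pid_mx.
have sZD : (Z <= D)%MS by rewrite (submx_trans (submxMl _ _)) ?eq_row_base.
exists Z; first exact: submx_trans sZD (diffmxSl K A).
have AZ0 : \rank (A :&: Z)%MS = 0%N.
  apply/eqP; rewrite mxrank_eq0 -submx0 -(capmx_diff K A) sub_capmx capmxSl andbT.
  exact: submx_trans (capmxSr _ _) sZD.
by move: (mxrank_sum_cap A Z); rewrite addsmxE AZ0 rank_Z addn0.
Qed.

Section PointsMatrix.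
Variables (R : nzRingType) (W : finType).

Definition points_mx q (X : W -> 'rV[R]_q) : 'M[R]_(q, #|W|) :=
  \matrix_(j, i) X (enum_val i) 0 j.

Definition mx_points q (M : 'M[R]_(q, #|W|)) (w : W) : 'rV[R]_q :=
  (col (enum_rank w) M)^T.

Lemma mx_pointsE q (M : 'M[R]_(q, #|W|)) w j : mx_points M w 0 j = M j (enum_rank w).
Proof. by rewrite !mxE. Qed.

Lemma points_mxK q (X : W -> 'rV[R]_q) w : mx_points (points_mx X) w = X w.
Proof. by apply/rowP => j; rewrite mx_pointsE mxE enum_rankK. Qed.

Lemma mx_points_col_mx q p (M : 'M[R]_(q, #|W|)) (N : 'M[R]_(p, #|W|)) w :
  mx_points (col_mx M N) w = row_mx (mx_points M w) (mx_points N w).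
Proof. by rewrite /mx_points !tr_col tr_col_mx row_row_mx. Qed.
End PointsMatrix.

Lemma rank_sum_mx_points (F : fieldType) (W : finType) q (M : 'M[F]_(q, #|W|)) :
  \rank (\sum_(w : W) <<mx_points M w>>)%MS = \rank M.
Proof.
rewrite -[RHS]mxrank_tr; apply/eqP; rewrite eqn_leq; apply/andP; split; apply: mxrankS.
  by apply/sumsmx_subP => w _; rewrite genmxE /mx_points tr_col row_sub.
apply/row_subP => i; apply: (sumsmx_sup (enum_val i)) => //.
by rewrite genmxE /mx_points tr_col enum_valK.
Qed.

Section RelationMatrix.
Variables (F : fieldType) (W B E : finType) (wv : E -> W) (bv : E -> B).

Definition relations_hold (g : E -> F) q (X : W -> 'rV[F]_q) : Prop :=
  forall b, \sum_(e | bv e == b) g e *: X (wv e) = 0.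

Definition relation_mx (g : E -> F) : 'M[F]_(#|W|, #|B|) :=
  \matrix_(i, k) \sum_(e | bv e == enum_val k) g e * (wv e == enum_val i)%:R.

Lemma mul_relation_mxE g q (M : 'M[F]_(q, #|W|)) j k :
  (M *m relation_mx g) j k =
  \sum_(e | bv e == enum_val k) g e * M j (enum_rank (wv e)).
Proof.
rewrite mxE; under eq_bigr do rewrite mxE mulr_sumr.
rewrite exchange_big; apply: eq_bigr => e _ /=.
rewrite (bigD1 (enum_rank (wv e))) //= enum_rankK eqxx mulr1 mulrC big1 ?addr0 //.
move=> i i_neq; case: eqVneq => [wv_e|]; last by rewrite !mulr0.
by move: i_neq; rewrite wv_e enum_valK eqxx.
Qed.

Lemma mul_relation_mx_eq0 g q (M : 'M[F]_(q, #|W|)) :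
  M *m relation_mx g = 0 <-> relations_hold g (mx_points M).
Proof.
split=> [MR0 b | rel].
  apply/rowP => j; rewrite summxE [RHS]mxE.
  have := congr1 (fun N : 'M_(q, #|B|) => N j (enum_rank b)) MR0.
  rewrite mul_relation_mxE enum_rankK [RHS]mxE => entry0; rewrite -[RHS]entry0.
  by apply: eq_bigr => e _; rewrite mxE mx_pointsE.
apply/matrixP => j k; rewrite mul_relation_mxE [RHS]mxE.
have := congr1 (fun v : 'rV_q => v 0 j) (rel (enum_val k)).
rewrite summxE [RHS]mxE => entry0; rewrite -[RHS]entry0.
by apply: eq_bigr => e _; rewrite mxE mx_pointsE.
Qed.

Lemma exists_relations_lift g p m (X : W -> 'rV[F]_p) :
  relations_hold g X ->
  (\rank (\sum_w <<X w>>)%MS + m + #|B| <= #|W|)%N ->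
  exists Z : W -> 'rV[F]_m,
    relations_hold g (fun w => row_mx (X w) (Z w)) /\
    \rank (\sum_w <<row_mx (X w) (Z w)>>)%MS = (\rank (\sum_w <<X w>>)%MS + m)%N.
Proof.
move=> relX card_le.
pose M := points_mx X; pose K := kermx (relation_mx g).
have M_pts : mx_points M =1 X := points_mxK X.
have rank_M : \rank M = \rank (\sum_w <<X w>>)%MS.
  by rewrite -rank_sum_mx_points; under eq_bigr do rewrite M_pts.
have sMK : (M <= K)%MS.
  apply/sub_kermxP/(mul_relation_mx_eq0 g M).2 => b.
  by rewrite -[RHS](relX b); apply: eq_bigr => e _; rewrite M_pts.
have rank_K : (\rank M + m <= \rank K)%N.
  by move: (rank_leq_col (relation_mx g)); rewrite mxrank_ker; lia.
have [Z sZK rank_MZ] := exists_col_mx_extension sMK rank_K.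
have MZ_pts w : mx_points (col_mx M Z) w = row_mx (X w) (mx_points Z w).
  by rewrite mx_points_col_mx M_pts.
have MZ0 : col_mx M Z *m relation_mx g = 0.
  by rewrite mul_col_mx (sub_kermxP sMK) (sub_kermxP sZK) col_mx0.
exists (mx_points Z); split.
  move=> b; rewrite -[RHS]((mul_relation_mx_eq0 g _).1 MZ0 b).
  by apply: eq_bigr => e _; rewrite MZ_pts.
rewrite -rank_M -rank_MZ -rank_sum_mx_points.
by congr (\rank _); apply: eq_bigr => w _; rewrite MZ_pts.
Qed.

End RelationMatrix.

Section BlockProjection.
Variables (F : fieldType) (p m : nat).
Local Notation U := (copid_mx p : 'M[F]_(p + m)).
Local Notation V := (pid_mx p : 'M[F]_(p + m)).

Lemma copid_pid_mx_complementary :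
  [/\ \rank U = m, \rank V = p, \rank (U :&: V)%MS = 0%N & (U + V == 1%:M)%MS].
Proof.
have rank_U : \rank U = m by rewrite rank_copid_mx ?leq_addr // addKn.
have rank_V : \rank V = p by rewrite rank_pid_mx ?leq_addr.
have UV1 : (U + V == 1%:M)%MS.
  rewrite submx1 /=.
  have -> : 1%:M = U + V :> 'M[F]_(p + m) by rewrite subrK.
  by rewrite addmx_sub_adds ?submx_refl.
split=> //; move: (mxrank_sum_cap U V).
by rewrite (eqmxP UV1) mxrank1 rank_U rank_V; lia.
Qed.

Lemma row_mx_mul_pid (a : 'rV[F]_p) (z : 'rV[F]_m) :
  row_mx a z *m (pid_mx p : 'M_(p + m, p)) = a.
Proof. by rewrite pid_mx_col mul_row_col mulmx1 mulmx0 addr0. Qed.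

Lemma row_mx_proj_pid (a : 'rV[F]_p) (z : 'rV[F]_m) :
  row_mx a z *m proj_mx V U = row_mx a 0.
Proof.
have [_ _ /eqP] := copid_pid_mx_complementary; rewrite mxrank_eq0 capmxC => /eqP VU0.
have pid_part : row_mx a z *m V = row_mx a 0.
  by rewrite pid_mx_block mul_row_block !mulmx0 mulmx1 !addr0.
have copid_part : row_mx a z *m U = row_mx 0 z.
  by rewrite mulmxBr mulmx1 pid_part opp_row_mx add_row_mx subrr oppr0 addr0.
have -> : row_mx a z = row_mx a 0 + row_mx 0 z by rewrite add_row_mx addr0 add0r.
rewrite mulmxDl proj_mx_id // ?proj_mx_0 ?addr0 //.
  by rewrite -copid_part submxMl.
by rewrite -pid_part submxMl.
Qed.

End BlockProjection.

(* Stated at size (p + m).+1 rather than p.+1 + m: these are convertible, but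
   only the former matches d.+1 once d is replaced by r + m. *)
Lemma central_proj_pid_row_mx p m (a : 'rV[C]_p.+1) (z : 'rV[C]_m) :
  central_proj (n := p + m) (copid_mx p.+1) (pid_mx p.+1) (row_mx a z)
    *m pid_mx p.+1 = a.
Proof. by rewrite -[RHS](row_mx_mul_pid a (0 : 'rV_m)) -(row_mx_proj_pid a z). Qed.

Section BlackDegreeThree.
Variables (W B E : finType) (wv : E -> W) (bv : E -> B).
Hypothesis black_deg3 : forall b : B, #|[set e | bv e == b]| = 3%N.

Lemma line_bE n (X : W -> 'rV[C]_n.+1) b :
  line_b wv bv X b = (\sum_(e in [set e | bv e == b]) <<X (wv e)>>)%MS.
Proof. by apply: eq_bigl => e; rewrite inE. Qed.

Lemma tcd_relations n (T : W -> 'rV[C]_n.+1) :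
  is_TCD wv bv T ->
  exists2 g : E -> C, relations_hold wv bv g T & forall b, exists2 e, bv e = b & g e != 0.
Proof.
move=> [_ tcdT].
have rel b : exists g : E -> C,
    \sum_(e in [set e | bv e == b]) g e *: T (wv e) = 0 /\
    exists2 e, e \in [set e | bv e == b] & g e != 0.
  have [|g relg nz_g] := exists_linear_relation (A := [set e | bv e == b])
                          (u := fun e => T (wv e)).
    by rewrite black_deg3 -line_bE (leq_ltn_trans (tcdT b).2).
  by exists g.
have [gam gamP] := fin_all_exists rel.
exists (fun e => gam (bv e) e) => b.
  rewrite -[RHS](gamP b).1.
  by apply: eq_big => [e | e /eqP bv_e]; rewrite ?inE ?bv_e.
have [e] := (gamP b).2; rewrite inE => /eqP bv_e nz_e.
by exists e; rewrite ?bv_e.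
Qed.

Lemma rank_line_b_le2_of_relations n g (X : W -> 'rV[C]_n.+1) e0 :
  relations_hold wv bv g X -> g e0 != 0 -> (\rank (line_b wv bv X (bv e0)) <= 2)%N.
Proof.
move=> relX nz_e0; rewrite line_bE.
have rel_b : \sum_(e in [set e | bv e == bv e0]) g e *: X (wv e) = 0.
  by rewrite -[RHS](relX (bv e0)); apply: eq_bigl => e; rewrite inE.
rewrite -[2%N]/(3.-1) -(black_deg3 (bv e0)).
by rewrite (linear_relation_rank_le (i0 := e0) rel_b) ?inE.
Qed.

Lemma rank_line_b_gt1 n (T : W -> 'rV[C]_n.+1) b :
  is_TCD wv bv T -> (1 < \rank (line_b wv bv T b))%N.
Proof.
move=> [nz_T tcdT].
have /card_gt1P[e1 [e2 [e1b e2b e12]]] : (1 < #|[set e | bv e == b]|)%N.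
  by rewrite black_deg3.
rewrite line_bE (rank_sum_genmx_gt1 e1b e2b) ?nz_T //.
by move: e1b e2b; rewrite !inE => /eqP e1b /eqP e2b; apply: (tcdT b).1.
Qed.

Section Lift.
Variables (n k : nat) (P : 'M[C]_(n.+1, k.+1)).
Variables (X : W -> 'rV[C]_n.+1) (T : W -> 'rV[C]_k.+1).
Hypotheses (XP : forall w, X w *m P = T w) (tcdT : is_TCD wv bv T).
Hypothesis line_rank_X : forall b, (\rank (line_b wv bv X b) <= 2)%N.

Lemma is_TCD_lift : is_TCD wv bv X.
Proof.
have [nz_T tcdT'] := tcdT; split=> [w | b].
  by apply: contraNneq (nz_T w) => X0; rewrite -XP X0 mul0mx.
split=> // e e' eb e'b ee'; apply: contra ((tcdT' b).1 e e' eb e'b ee').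
by rewrite /proj_eq -!XP => /andP[? ?]; rewrite !submxMr.
Qed.

Lemma admissible_lift (U : 'M[C]_n.+1) : U *m P = 0 -> admissible wv bv X U.
Proof.
move=> UP0; have [nz_T _] := tcdT.
have sU_kerP : (U <= kermx P)%MS by apply/sub_kermxP.
split=> [w | b].
  apply/negP => /(submxMr P); rewrite UP0 XP => /submx0null T0.
  by move: (nz_T w); rewrite T0 eqxx.
set L := line_b wv bv X b.
have lineT_sub : (line_b wv bv T b <= L *m P)%MS.
  apply/sumsmx_subP => e eb; rewrite genmxE -XP submxMr //.
  by rewrite (sumsmx_sup e) ?genmxE.
have rankL_le : (\rank L <= \rank (L *m P))%N.
  apply: leq_trans (line_rank_X b) (leq_trans (rank_line_b_gt1 b tcdT) _).
  exact: mxrankS.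
apply/eqP; rewrite -leqn0 capmxC (leq_trans (mxrankS (capmxS (submx_refl L) sU_kerP))) //.
by rewrite -(leq_add2l (\rank (L *m P))) addn0 mxrank_mul_ker.
Qed.

End Lift.
End BlackDegreeThree.

Theorem proposition4p9
  (W B E L : finType) (wv : E -> W) (bv : E -> B) (lw : L -> W)
  (sigma : {perm dart E L}) (r d : nat) :
  is_BTB wv bv lw sigma -> minimal_BTB sigma ->
  (1 <= r)%N -> (r < d)%N -> (d + #|B| + 1 <= #|W|)%N ->
  forall T : W -> 'rV[C]_r.+1,
    is_TCD wv bv T -> tcd_rank T = r ->
    exists (That : W -> 'rV[C]_d.+1) (U V : 'M[C]_d.+1)
           (P : 'M[C]_(d.+1, r.+1)),
      [/\ is_TCD wv bv That /\ tcd_rank That = d,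
          (* U has projective dimension d-r-1, V has dimension r, and they
             are complementary in CP^d *)
          [/\ \rank U = (d - r)%N, \rank V = r.+1,
               \rank (U :&: V)%MS = 0%N & (U + V == 1%:M)%MS],
          admissible wv bv That U,
          (* P restricted to V is a linear isomorphism V -> C^(r+1), i.e. an
             identification of V with CP^r composed with a projective
             transformation of CP^r *)
          \rank (V *m P) = r.+1
        & forall w, proj_eq (T w) (central_proj U V (That w) *m P)].
Proof.
move=> [black_deg3 _ _] _ r_gt0 lt_rd card_W T tcdT rankT.
have rank_span : \rank (\sum_w <<T w>>)%MS = r.+1.
  by move: rankT r_gt0; rewrite /tcd_rank; case: (\rank _) => [|k] /= <-.
have [g relT nz_g] := tcd_relations black_deg3 tcdT.
move: (d - r)%N (esym (subnKC (ltnW lt_rd))) card_W => m -> card_W.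
have [|Z [relX rankX]] := exists_relations_lift (m := m) relT.
  by rewrite rank_span; lia.
set X := fun w => row_mx (T w) (Z w) in relX rankX.
have XP w : X w *m pid_mx r.+1 = T w := row_mx_mul_pid (T w) (Z w).
have line_rank_X b : (\rank (line_b wv bv X b) <= 2)%N.
  have [e <- nz_e] := nz_g b.
  exact: (rank_line_b_le2_of_relations black_deg3 relX nz_e).
have [rank_U rank_V rank_UV UV1] := copid_pid_mx_complementary C r.+1 m.
exists X, (copid_mx r.+1), (pid_mx r.+1), (pid_mx r.+1); split=> //.
- split; first exact: is_TCD_lift XP tcdT line_rank_X.
  by rewrite /tcd_rank rankX rank_span.
- apply: (admissible_lift black_deg3 XP tcdT line_rank_X).
  by rewrite mul_copid_mx_pid ?leq_addr.
- rewrite mul_pid_mx minnn rank_pid_mx ?geq_minl ?geq_minr //.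
  by apply/minn_idPr; rewrite ltnS leq_addr.
- by move=> w; rewrite central_proj_pid_row_mx /proj_eq !submx_refl.
Qed.
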